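(* Every program $P$ of the reactive language defined in the context is deterministic: coinductively, for every set of input signals $I\subseteq \mathit{Int}$, if $P\xrightarrow{I/O_1}P_1$ and $P\xrightarrow{I/O_2}P_2$, then $O_1=O_2$, $P_1$ and $P_2$ are equal up to renaming, and $P_1$ is again deterministic in the same sense.
   Context: Fix a countable set of signal names $s,s',\dots$ and a finite set $\mathit{Int}$ of signal names (the observable interface). A signal environment $E$ is a partial function from signal names to $\{\mathit{true},\mathit{false}\}$ whose finite domain $\mathrm{dom}(E)$ contains $\mathit{Int}$; $E[s:=\mathit{true}]$ denotes update. Threads are given by the grammar $T ::= () \mid (\mathsf{emit}\ s) \mid (\mathsf{local}\ s\ T) \mid (\mathsf{thread}\ T) \mid (\mathsf{when}\ s\ T) \mid (\mathsf{watch}\ s\ T) \mid A(\vec s) \mid (T;T)$, where $A(\vec s)$ are thread identifiers with signal parameters, each defined by exactly one equation $A(\vec x)=T$; $\mathsf{local}\ s$ binds $s$ in $T$. $\mathrm{sig}(T)$ is the set of free signals of $T$, and $\mathrm{sig}(P)$ the union over threads of a multiset $P$. A program is a finite non-empty multiset of threads. Atomic thread execution $(T,E)\Rightarrow_P (T',E')$ ($P$ a multiset of spawned threads, $\cup$ multiset union) is the least relation closed under: (T1) $((),E)\Rightarrow_\emptyset((),E)$; (T2) $(\mathsf{emit}\ s,E)\Rightarrow_\emptyset((),E[s:=\mathit{true}])$; (T3) if $s'\notin\mathrm{dom}(E)$ and $([s'/s]T,E\cup\{s'\mapsto\mathit{false}\})\Rightarrow_P(T',E')$ then $(\mathsf{local}\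 s\ T,E)\Rightarrow_P(T',E')$; (T4) $(\mathsf{thread}\ T,E)\Rightarrow_{\{T\}}((),E)$; (T5) if $A(\vec x)=T$ and $([\vec s/\vec x]T,E)\Rightarrow_P(T',E')$ then $(A(\vec s),E)\Rightarrow_P(T',E')$; (T6) if $E(s)=\mathit{false}$ then $(\mathsf{when}\ s\ T,E)\Rightarrow_\emptyset(\mathsf{when}\ s\ T,E)$; (T7) if $E(s)=\mathit{true}$ and $(T,E)\Rightarrow_P((),E')$ then $(\mathsf{when}\ s\ T,E)\Rightarrow_P((),E')$; (T8) if $E(s)=\mathit{true}$, $(T,E)\Rightarrow_P(T',E')$, $T'\neq()$ then $(\mathsf{when}\ s\ T,E)\Rightarrow_P(\mathsf{when}\ s\ T',E')$; (T9) if $(T,E)\Rightarrow_P((),E')$ then $(\mathsf{watch}\ s\ T,E)\Rightarrow_P((),E')$; (T10) if $(T,E)\Rightarrow_P(T',E')$, $T'\neq()$ then $(\mathsf{watch}\ s\ T,E)\Rightarrow_P(\mathsf{watch}\ s\ T',E')$; (T11) if $(T_1,E)\Rightarrow_{P_1}((),E_1)$ and $(T_2,E_1)\Rightarrow_{P_2}(T',E')$ then $(T_1;T_2,E)\Rightarrow_{P_1\cup P_2}(T',E')$; (T12) if $(T_1,E)\Rightarrow_P(T',E')$, $T'\neq()$ then $(T_1;T_2,E)\Rightarrow_P(T';T_2,E')$. $(T,E)$ is stuck, written $(T,E)\ddagger$, if $(T,E)\Rightarrow_\emptyset(T,E)$. The end-of-instant abort function: $\lfloor P\rfloor_E=\{\lfloor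 T\rfloor_E\mid T\in P\}$ (multiset), $\lfloor()\rfloor_E=()$, $\lfloor T;T'\rfloor_E=\lfloor T\rfloor_E;T'$, $\lfloor\mathsf{when}\ s\ T\rfloor_E=\mathsf{when}\ s\ \lfloor T\rfloor_E$ if $E(s)=\mathit{true}$ and $\mathsf{when}\ s\ T$ otherwise, $\lfloor\mathsf{watch}\ s\ T\rfloor_E=()$ if $E(s)=\mathit{true}$ and $\mathsf{watch}\ s\ \lfloor T\rfloor_E$ otherwise. Instant execution $(P,E)\Downarrow(P'',E'')$ is the least relation with: (P1) if $(T,E)\ddagger$ for all $T\in P$ then $(P,E)\Downarrow(\lfloor P\rfloor_E,E)$; (P2) if some $T\in P$ has $\neg(T,E)\ddagger$, $(T,E)\Rightarrow_{P'}(T',E')$ and $((P\setminus\{T\})\cup\{T'\}\cup P',E')\Downarrow(P'',E'')$, then $(P,E)\Downarrow(P'',E'')$ (the choice of $T$ is nondeterministic). Input/output transitions: for $I,O\subseteq\mathit{Int}$, $P\xrightarrow{I/O}P'$ iff $(P,E_{I,P})\Downarrow(P',E')$ and $O=\{s\in\mathit{Int}\mid E'(s)=\mathit{true}\}$, where $E_{I,P}(s)=\mathit{true}$ if $s\in I$, $\mathit{false}$ if $s\in(\mathit{Int}\cup\mathrm{sig}(P))\setminus I$, undefined otherwise. Two programs $P,P'$ are equal up to renaming if there is a bijection $\mathrm{sig}(P)\to\mathrm{sig}(P')$ that is the identity on $\mathit{Int}$ and whose application to $P$ yields $P'$. A program $P$ is deterministic (coinductive definition: the greatest predicate such that) for every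 $I$, whenever $P\xrightarrow{I/O_1}P_1$ and $P\xrightarrow{I/O_2}P_2$, then $O_1=O_2$, $P_1=P_2$ up to renaming, and $P_1$ is deterministic. *)

From Stdlib Require Import List Arith Bool Permutation.
Import ListNotations.

Definition signal := nat.

(* Locally nameless syntax: free signals are names [FV s], signals bound by
   [local] are de Bruijn indices [BV n] (terms are thus identified up to
   alpha-conversion, and [s'/s]T in rule (T3) is capture-free opening). *)
Inductive sname : Type :=
| FV (s : signal)
| BV (n : nat).

Inductive thread : Type :=
| TNil
| TEmit (s : sname)
| TLocal (T : thread)
| TThread (T : thread)
| TWhen (s : sname) (T : thread)
| TWatch (s : sname) (T : thread)
| TCall (A : nat) (args : list sname)
| TSeq (T1 T2 : thread).

(* A program / multiset of threads is a list considered up to permutation. *)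
Definition program := list thread.

(* Definitions of thread identifiers: A(xs) = body, with xs = fst (D A). *)
Definition defs := nat -> (list signal * thread).

Definition fsn (x : sname) : list signal :=
  match x with FV s => [s] | BV _ => [] end.

Fixpoint fsig (T : thread) : list signal :=
  match T with
  | TNil => []
  | TEmit s => fsn s
  | TLocal T => fsig T
  | TThread T => fsig T
  | TWhen s T => fsn s ++ fsig T
  | TWatch s T => fsn s ++ fsig T
  | TCall _ args => flat_map fsn args
  | TSeq T1 T2 => fsig T1 ++ fsig T2
  end.

Definition sigP (P : program) : list signal := flat_map fsig P.

Definition open_sn (k : nat) (s : signal) (x : sname) : sname :=
  match x with
  | BV n => if Nat.eqb n k then FV s else BV n
  | FV _ => x
  end.

Fixpoint open_rec (k : nat) (s : signal) (T : thread) : thread :=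
  match T with
  | TNil => TNil
  | TEmit x => TEmit (open_sn k s x)
  | TLocal T => TLocal (open_rec (S k) s T)
  | TThread T => TThread (open_rec k s T)
  | TWhen x T => TWhen (open_sn k s x) (open_rec k s T)
  | TWatch x T => TWatch (open_sn k s x) (open_rec k s T)
  | TCall A args => TCall A (map (open_sn k s) args)
  | TSeq T1 T2 => TSeq (open_rec k s T1) (open_rec k s T2)
  end.

Definition open (s : signal) (T : thread) : thread := open_rec 0 s T.

(* parallel substitution [ss/xs] of free names (no capture possible) *)
Fixpoint lookup_sub (xs : list signal) (ss : list sname) (x : signal) : sname :=
  match xs, ss with
  | y :: xs', t :: ss' => if Nat.eqb x y then t else lookup_sub xs' ss' x
  | _, _ => FV x
  end.

Definition subst_sn (xs : list signal) (ss : list sname) (x : sname) : sname :=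
  match x with FV y => lookup_sub xs ss y | BV n => BV n end.

Fixpoint subst (xs : list signal) (ss : list sname) (T : thread) : thread :=
  match T with
  | TNil => TNil
  | TEmit x => TEmit (subst_sn xs ss x)
  | TLocal T => TLocal (subst xs ss T)
  | TThread T => TThread (subst xs ss T)
  | TWhen x T => TWhen (subst_sn xs ss x) (subst xs ss T)
  | TWatch x T => TWatch (subst_sn xs ss x) (subst xs ss T)
  | TCall A args => TCall A (map (subst_sn xs ss) args)
  | TSeq T1 T2 => TSeq (subst xs ss T1) (subst xs ss T2)
  end.

(* Signal environments: partial functions signal -> bool
   (domain = {s | E s <> None}). *)
Definition env := signal -> option bool.

Definition upd (E : env) (s : signal) (b : bool) : env :=
  fun x => if Nat.eqb x s then Some b else E x.

Definition val (E : env) (x : sname) : option bool :=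
  match x with FV s => E s | BV _ => None end.

Definition emit_env (E : env) (x : sname) : env :=
  match x with FV s => upd E s true | BV _ => E end.

(* Atomic thread execution (T,E) =>_P (T',E') : [step D E T P T' E'] *)
Inductive step (D : defs) : env -> thread -> list thread -> thread -> env -> Prop :=
| RT1 : forall E, step D E TNil [] TNil E
| RT2 : forall E s, step D E (TEmit (FV s)) [] TNil (upd E s true)
| RT3 : forall E T s' P T' E',
    E s' = None ->
    step D (upd E s' false) (open s' T) P T' E' ->
    step D E (TLocal T) P T' E'
| RT4 : forall E T, step D E (TThread T) [T] TNil E
| RT5 : forall E A ss xs body P T' E',
    D A = (xs, body) ->
    length xs = length ss ->
    step D E (subst xs ss body) P T' E' ->
    step D E (TCall A ss) P T' E'
| RT6 : forall E s T, val E s = Some false -> step D E (TWhen s T) [] (TWhen s T) E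
| RT7 : forall E s T P E',
    val E s = Some true -> step D E T P TNil E' ->
    step D E (TWhen s T) P TNil E'
| RT8 : forall E s T P T' E',
    val E s = Some true -> step D E T P T' E' -> T' <> TNil ->
    step D E (TWhen s T) P (TWhen s T') E'
| RT9 : forall E s T P E',
    step D E T P TNil E' -> step D E (TWatch s T) P TNil E'
| RT10 : forall E s T P T' E',
    step D E T P T' E' -> T' <> TNil ->
    step D E (TWatch s T) P (TWatch s T') E'
| RT11 : forall E T1 T2 P1 E1 P2 T' E',
    step D E T1 P1 TNil E1 -> step D E1 T2 P2 T' E' ->
    step D E (TSeq T1 T2) (P1 ++ P2) T' E'
| RT12 : forall E T1 T2 P T' E',
    step D E T1 P T' E' -> T' <> TNil ->
    step D E (TSeq T1 T2) P (TSeq T' T2) E'.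

Definition stuck (D : defs) (E : env) (T : thread) : Prop := step D E T [] T E.

Definition is_true_sig (E : env) (x : sname) : bool :=
  match val E x with Some true => true | _ => false end.

(* end-of-instant abort function |_ T _|_E  (the cases not covered in the
   paper, which never apply to stuck threads, are left unchanged) *)
Fixpoint abort (E : env) (T : thread) : thread :=
  match T with
  | TNil => TNil
  | TSeq Ta Tb => TSeq (abort E Ta) Tb
  | TWhen s Ta => if is_true_sig E s then TWhen s (abort E Ta) else TWhen s Ta
  | TWatch s Ta => if is_true_sig E s then TNil else TWatch s (abort E Ta)
  | _ => T
  end.

Inductive instant (D : defs) : program -> env -> program -> env -> Prop :=
| RP1 : forall P E,
    (forall T, In T P -> stuck D E T) ->
    instant D P E (map (abort E) P) E
| RP2 : forall Pa T Pb E P' T' E' P'' E'',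
    ~ stuck D E T ->
    step D E T P' T' E' ->
    instant D (Pa ++ T' :: Pb ++ P') E' P'' E'' ->
    instant D (Pa ++ T :: Pb) E P'' E''.

Definition memb (s : signal) (l : list signal) : bool := existsb (Nat.eqb s) l.

(* E_{I,P} ; input sets I ⊆ Int are boolean predicates *)
Definition init_env (Int : list signal) (I : signal -> bool) (P : program) : env :=
  fun s => if I s then Some true
           else if memb s (Int ++ sigP P) then Some false else None.

Definition output (Int : list signal) (E : env) : signal -> bool :=
  fun s => memb s Int && match E s with Some true => true | _ => false end.

Definition trans (Int : list signal) (D : defs) (P : program)
    (I : signal -> bool) (O : signal -> bool) (P' : program) : Prop :=
  exists E', instant D P (init_env Int I P) P' E' /\ O = output Int E'.

Definition rename_sn (f : signal -> signal) (x : sname) : sname :=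
  match x with FV s => FV (f s) | BV n => BV n end.

Fixpoint rename (f : signal -> signal) (T : thread) : thread :=
  match T with
  | TNil => TNil
  | TEmit x => TEmit (rename_sn f x)
  | TLocal T => TLocal (rename f T)
  | TThread T => TThread (rename f T)
  | TWhen x T => TWhen (rename_sn f x) (rename f T)
  | TWatch x T => TWatch (rename_sn f x) (rename f T)
  | TCall A args => TCall A (map (rename_sn f) args)
  | TSeq T1 T2 => TSeq (rename f T1) (rename f T2)
  end.

(* P and P' are equal up to renaming: a bijection f : sig(P) -> sig(P')
   (injective on sig(P); onto sig(P') since the renamed P equals P'),
   which is the identity on Int (and whose inverse is too), and whose
   application to P yields P' as a multiset. *)
Definition eq_up_to_renaming (Int : list signal) (P P' : program) : Prop :=
  exists f : signal -> signal,
    (forall x y, In x (sigP P) -> In y (sigP P) -> f x = f y -> x = y) /\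
    (forall x, In x (sigP P) -> (In x Int \/ In (f x) Int) -> f x = x) /\
    Permutation (map (rename f) P) P'.

CoInductive deterministic (Int : list signal) (D : defs) (P : program) : Prop :=
| det_intro :
    (forall (I O1 O2 : signal -> bool) (Q1 Q2 : program),
        (forall s, I s = true -> In s Int) ->
        trans Int D P I O1 Q1 -> trans Int D P I O2 Q2 ->
        (forall s, O1 s = O2 s) /\ eq_up_to_renaming Int Q1 Q2 /\
        deterministic Int D Q1) ->
    deterministic Int D P.

Definition wf_defs (D : defs) : Prop :=
  forall A, NoDup (fst (D A)) /\ incl (fsig (snd (D A))) (fst (D A)).

(* Refine atomic thread execution into micro steps, each acting on the
   environment at most once (emitting a signal or allocating a fresh local
   one); an instant is then a maximal micro-step reduction followed by the
   abort function.  Micro steps of distinct threads commute, since emission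
   only sets signals to true and [when] only waits for true signals; two
   threads allocating the same fresh name commute once one of them takes
   another fresh name; and a single thread is deterministic up to its choice
   of fresh name.  Hence every peak of the micro-step relation closes in at
   most one step on each side, up to a bijective renaming that fixes the
   initial environment.  So all maximal reductions have the same length and
   their normal forms agree up to such a renaming, which commutes with abort
   and preserves the outputs. *)

From Stdlib Require Import List PeanoNat Permutation Lia FunctionalExtensionality Classical.
Import ListNotations.

Lemma rename_sn_open f k s x :
  rename_sn f (open_sn k s x) = open_sn k (f s) (rename_sn f x).
Proof. destruct x as [y|n]; simpl; auto. destruct (Nat.eqb n k); auto. Qed.

Lemma rename_open f T : forall k s,
  rename f (open_rec k s T) = open_rec k (f s) (rename f T).
Proof.
  induction T; intros k s0; simpl; f_equal; auto using rename_sn_open.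
  rewrite !map_map. apply map_ext. intros; apply rename_sn_open.
Qed.

Lemma rename_sn_ext f g x :
  (forall y, In y (fsn x) -> f y = g y) -> rename_sn f x = rename_sn g x.
Proof. destruct x; simpl; intros H; f_equal; auto. Qed.

Lemma rename_ext f g T :
  (forall x, In x (fsig T) -> f x = g x) -> rename f T = rename g T.
Proof.
  induction T; intros H; simpl in *; f_equal;
    auto 6 using rename_sn_ext, in_or_app.
  apply map_ext_in. intros a Ha. apply rename_sn_ext. intros y Hy. apply H.
  apply in_flat_map. eauto.
Qed.

Lemma rename_id T : rename (fun x => x) T = T.
Proof.
  induction T; simpl; f_equal; auto; try (destruct s; reflexivity).
  rewrite <- (map_id args) at 2. apply map_ext. intros []; reflexivity.
Qed.

Lemma rename_id_on f T : (forall x, In x (fsig T) -> f x = x) -> rename f T = T.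
Proof. intros. rewrite (rename_ext f (fun x => x)); auto. apply rename_id. Qed.

Lemma map_rename_id_on f P :
  (forall T x, In T P -> In x (fsig T) -> f x = x) -> map (rename f) P = P.
Proof.
  intros H. rewrite <- (map_id P) at 2. apply map_ext_in.
  intros T HT. apply rename_id_on. eauto.
Qed.

Lemma rename_comp f g T : rename f (rename g T) = rename (fun x => f (g x)) T.
Proof.
  induction T; simpl; f_equal; auto; try (destruct s; reflexivity).
  rewrite map_map. apply map_ext. intros []; reflexivity.
Qed.

Lemma map_rename_comp f g P :
  map (rename f) (map (rename g) P) = map (rename (fun x => f (g x))) P.
Proof. rewrite map_map. apply map_ext. intros; apply rename_comp. Qed.

Lemma map_rename_ext f g P :
  (forall x, f x = g x) -> map (rename f) P = map (rename g) P.
Proof. intros. apply map_ext. intros; apply rename_ext; auto. Qed.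

Lemma fsn_open k s x y : In y (fsn (open_sn k s x)) -> y = s \/ In y (fsn x).
Proof.
  destruct x as [z|n]; simpl; auto.
  destruct (Nat.eqb n k); simpl; intuition.
Qed.

Lemma fsig_open T : forall k s x,
  In x (fsig (open_rec k s T)) -> x = s \/ In x (fsig T).
Proof.
  induction T; intros k s0 x H; simpl in *; eauto using fsn_open;
    repeat match goal with
    | H : In _ (_ ++ _) |- _ => apply in_app_or in H as [H|H]
    end;
    try (destruct (fsn_open _ _ _ _ H); auto using in_or_app; fail);
    try (match goal with IH : forall k s x, In x (fsig (open_rec k s ?T)) -> _,
                         H : In _ (fsig (open_rec _ _ ?T)) |- _ =>
           destruct (IH _ _ _ H); auto using in_or_app end).
  apply in_flat_map in H as [y [Hy Hx]]. apply in_map_iff in Hy as [z [<- Hz]].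
  destruct (fsn_open _ _ _ _ Hx); auto. right. apply in_flat_map; eauto.
Qed.

Lemma lookup_sub_rename f xs : forall ss y, In y xs -> length xs = length ss ->
  rename_sn f (lookup_sub xs ss y) = lookup_sub xs (map (rename_sn f) ss) y.
Proof.
  induction xs as [|x xs IH]; intros [|t ss] y Hy Hl; simpl in *; try easy.
  destruct (Nat.eqb_spec y x); auto.
  apply IH; [destruct Hy; congruence | auto].
Qed.

Lemma fsn_lookup_sub xs : forall ss y z, In y xs -> length xs = length ss ->
  In z (fsn (lookup_sub xs ss y)) -> In z (flat_map fsn ss).
Proof.
  induction xs as [|x xs IH]; intros [|t ss] y z Hy Hl H; simpl in *; try easy.
  apply in_or_app. destruct (Nat.eqb_spec y x); auto.
  right. apply (IH ss y); auto. destruct Hy; congruence.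
Qed.

Lemma rename_subst_sn f xs ss x : incl (fsn x) xs -> length xs = length ss ->
  rename_sn f (subst_sn xs ss x) = subst_sn xs (map (rename_sn f) ss) x.
Proof. destruct x; simpl; intros; auto. apply lookup_sub_rename; auto with datatypes. Qed.

Lemma fsn_subst_sn xs ss x z : incl (fsn x) xs -> length xs = length ss ->
  In z (fsn (subst_sn xs ss x)) -> In z (flat_map fsn ss).
Proof.
  destruct x; simpl; intros Hi Hl H; [|contradiction].
  apply (fsn_lookup_sub xs ss s z); auto. apply Hi; simpl; auto.
Qed.

Lemma incl_flat_map_fsn (l : list sname) xs x :
  incl (flat_map fsn l) xs -> In x l -> incl (fsn x) xs.
Proof. intros H Hx y Hy. apply H, in_flat_map. eauto. Qed.

Lemma rename_subst f xs ss body : incl (fsig body) xs -> length xs = length ss ->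
  rename f (subst xs ss body) = subst xs (map (rename_sn f) ss) body.
Proof.
  intros Hi Hl; induction body; simpl in *;
    try apply incl_app_inv in Hi as [? ?]; f_equal;
    auto using rename_subst_sn.
  rewrite map_map. apply map_ext_in. intros a Ha.
  apply rename_subst_sn; eauto using incl_flat_map_fsn.
Qed.

Lemma fsig_subst xs ss body x : incl (fsig body) xs -> length xs = length ss ->
  In x (fsig (subst xs ss body)) -> In x (flat_map fsn ss).
Proof.
  intros Hi Hl; induction body; simpl in *; intros H;
    repeat match goal with
    | H : incl (_ ++ _) _ |- _ => apply incl_app_inv in H as [? ?]
    | H : In _ (_ ++ _) |- _ => apply in_app_or in H as [H|H]
    end; eauto using fsn_subst_sn; try contradiction.
  apply in_flat_map in H as [y [Hy Hx]]. apply in_map_iff in Hy as [a [<- Ha]].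
  eauto using fsn_subst_sn, incl_flat_map_fsn.
Qed.

Lemma rename_abort f E1 E2 T : (forall x, E2 (f x) = E1 x) ->
  rename f (abort E1 T) = abort E2 (rename f T).
Proof.
  intros H.
  assert (Hs : forall x, is_true_sig E2 (rename_sn f x) = is_true_sig E1 x).
  { intros []; unfold is_true_sig; simpl; rewrite ?H; auto. }
  induction T; simpl; rewrite ?Hs; auto.
  - destruct (is_true_sig E1 s); simpl; f_equal; auto.
  - destruct (is_true_sig E1 s); simpl; f_equal; auto.
  - f_equal; auto.
Qed.

Lemma upd_same (E : env) s b : upd E s b s = Some b.
Proof. unfold upd. rewrite Nat.eqb_refl. auto. Qed.

Lemma upd_other (E : env) s b x : x <> s -> upd E s b x = E x.
Proof. unfold upd. destruct (Nat.eqb_spec x s); congruence. Qed.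

Lemma upd_defined (E : env) s b x : E x <> None -> upd E s b x <> None.
Proof. unfold upd. destruct (Nat.eqb x s); congruence. Qed.

Definition bij (f g : signal -> signal) : Prop :=
  (forall x, g (f x) = x) /\ (forall x, f (g x) = x).

Lemma upd_rename f g (E : env) s b : bij f g ->
  (fun x => upd E s b (g x)) = upd (fun x => E (g x)) (f s) b.
Proof.
  intros [Hgf Hfg]. apply functional_extensionality. intros x. unfold upd.
  destruct (Nat.eqb_spec x (f s)) as [->|Hx]; [rewrite Hgf, Nat.eqb_refl; auto|].
  destruct (Nat.eqb_spec (g x) s) as [<-|]; [rewrite Hfg in Hx; congruence | auto].
Qed.

Definition swap (a b x : signal) : signal :=
  if Nat.eqb x a then b else if Nat.eqb x b then a else x.

Lemma swap_l a b : swap a b a = b.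
Proof. unfold swap. rewrite Nat.eqb_refl. auto. Qed.

Lemma swap_other a b x : x <> a -> x <> b -> swap a b x = x.
Proof.
  unfold swap. destruct (Nat.eqb_spec x a), (Nat.eqb_spec x b); congruence.
Qed.

Lemma swap_involutive a b x : swap a b (swap a b x) = x.
Proof.
  unfold swap.
  destruct (Nat.eqb_spec x a) as [->|Ha]; [|destruct (Nat.eqb_spec x b) as [->|Hb]].
  - rewrite Nat.eqb_refl. destruct (Nat.eqb_spec b a); auto.
  - rewrite Nat.eqb_refl. auto.
  - destruct (Nat.eqb_spec x a), (Nat.eqb_spec x b); congruence.
Qed.

Lemma swap_bij a b : bij (swap a b) (swap a b).
Proof. split; apply swap_involutive. Qed.

Lemma rename_swap_involutive a b T : rename (swap a b) (rename (swap a b) T) = T.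
Proof.
  rewrite rename_comp. apply rename_id_on. intros; apply swap_involutive.
Qed.

Lemma env_swap_invariant (E : env) a b : E a = E b -> (fun x => E (swap a b x)) = E.
Proof.
  intros H. apply functional_extensionality. intros x. unfold swap.
  destruct (Nat.eqb_spec x a) as [->|]; auto.
  destruct (Nat.eqb_spec x b) as [->|]; auto.
Qed.

Lemma rename_swap_undefined (E : env) a b T : E a = None -> E b = None ->
  (forall x, In x (fsig T) -> E x <> None) -> rename (swap a b) T = T.
Proof.
  intros Ha Hb H. apply rename_id_on. intros x Hx.
  apply swap_other; intros ->; eapply H; eauto.
Qed.

Lemma fresh_signal (l : list signal) : exists s, ~ In s l.
Proof.
  exists (S (list_max l)). intros H.
  assert (Hle : list_max l <= list_max l) by reflexivity.
  apply list_max_le in Hle. rewrite Forall_forall in Hle. apply Hle in H. lia.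
Qed.

Inductive act : Type := ANone | AEmit (s : signal) | ALocal (s : signal).

Definition apply_act (E : env) (a : act) : env :=
  match a with ANone => E | AEmit s => upd E s true | ALocal s => upd E s false end.

Definition act_ok (E : env) (a : act) : Prop :=
  match a with ALocal s => E s = None | _ => True end.

Definition rename_act (f : signal -> signal) (a : act) : act :=
  match a with ANone => ANone | AEmit s => AEmit (f s) | ALocal s => ALocal (f s) end.

Definition act_signals (a : act) : list signal :=
  match a with ANone => [] | AEmit s | ALocal s => [s] end.

Definition env_true_le (E E' : env) : Prop :=
  forall s, E s = Some true -> E' s = Some true.

Lemma apply_act_rename f g E a : bij f g ->
  (fun x => apply_act E a (g x)) = apply_act (fun x => E (g x)) (rename_act f a).
Proof. destruct a; simpl; auto using upd_rename. Qed.

Lemma apply_act_true_le E a : act_ok E a -> env_true_le E (apply_act E a).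
Proof.
  intros Hok s Hs. destruct a as [|x|x]; simpl in *; auto;
    destruct (Nat.eq_dec s x) as [->|]; rewrite ?upd_same, ?upd_other; congruence.
Qed.

Lemma apply_act_defined E a x : E x <> None -> apply_act E a x <> None.
Proof. destruct a; simpl; auto using upd_defined. Qed.

Lemma apply_act_defined_inv E a x :
  apply_act E a x <> None -> E x <> None \/ In x (act_signals a).
Proof.
  destruct a as [|s|s]; simpl; auto;
    destruct (Nat.eq_dec x s); subst; auto; rewrite upd_other; auto.
Qed.

Lemma val_true_le E E' x : env_true_le E E' -> val E x = Some true -> val E' x = Some true.
Proof. destruct x; simpl; auto. Qed.

Section Determinism.

Variable D : defs.

(* A refinement of [step] in which every step performs at most one action on
   the environment; [local] allocates its fresh name in a step of its own. *)
Inductive mstep : env -> thread -> act -> list thread -> thread -> Prop :=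
| M_emit : forall E s, mstep E (TEmit (FV s)) (AEmit s) [] TNil
| M_local : forall E T s, E s = None -> mstep E (TLocal T) (ALocal s) [] (open s T)
| M_thread : forall E T, mstep E (TThread T) ANone [T] TNil
| M_call : forall E A ss xs body, D A = (xs, body) -> length xs = length ss ->
    mstep E (TCall A ss) ANone [] (subst xs ss body)
| M_when : forall E s T a Q T', val E s = Some true -> mstep E T a Q T' ->
    mstep E (TWhen s T) a Q (TWhen s T')
| M_when_nil : forall E s, val E s = Some true -> mstep E (TWhen s TNil) ANone [] TNil
| M_watch : forall E s T a Q T', mstep E T a Q T' -> mstep E (TWatch s T) a Q (TWatch s T')
| M_watch_nil : forall E s, mstep E (TWatch s TNil) ANone [] TNil
| M_seq : forall E T1 T2 a Q T', mstep E T1 a Q T' -> mstep E (TSeq T1 T2) a Q (TSeq T' T2)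
| M_seq_nil : forall E T2, mstep E (TSeq TNil T2) ANone [] T2.

Lemma mstep_act_ok E T a Q T' : mstep E T a Q T' -> act_ok E a.
Proof. induction 1; simpl; auto. Qed.

Lemma mstep_emit_fsig E T a Q T' : mstep E T a Q T' ->
  forall s, a = AEmit s -> In s (fsig T).
Proof.
  induction 1; intros s0 Ha; try discriminate; simpl; auto using in_or_app.
  injection Ha as ->. auto.
Qed.

Lemma mstep_true_le E E1 T a Q T' : mstep E T a Q T' ->
  env_true_le E E1 -> act_ok E1 a -> mstep E1 T a Q T'.
Proof.
  induction 1; intros Hle Hok; simpl in *; econstructor; eauto using val_true_le.
Qed.

Hypothesis HD : wf_defs D.

Lemma mstep_fsig E T a Q T' : mstep E T a Q T' ->
  (forall x, In x (fsig T') -> In x (fsig T) \/ a = ALocal x) /\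
  (forall T0 x, In T0 Q -> In x (fsig T0) -> In x (fsig T) \/ a = ALocal x).
Proof.
  induction 1 as [| ? ? ? ? | | ? A ? ? ? Hd | | | | | | ];
    simpl; split; intros; try contradiction; auto;
    repeat match goal with
    | H : In _ (_ ++ _) |- _ => apply in_app_or in H as [H|H]
    | IH : _ /\ _ |- _ => destruct IH as [IH1 IH2]
    end;
    try (edestruct IH1; eauto using in_or_app; fail);
    try (edestruct IH2; eauto using in_or_app; fail);
    auto using in_or_app.
  - destruct (fsig_open _ _ _ _ H0); subst; auto.
  - destruct H as [<-|[]]; auto.
  - left. destruct (HD A) as [_ Hi]. rewrite Hd in Hi. eapply fsig_subst; eauto.
Qed.

Lemma mstep_rename f g E T a Q T' : bij f g -> mstep E T a Q T' ->
  mstep (fun x => E (g x)) (rename f T) (rename_act f a) (map (rename f) Q) (rename f T').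
Proof.
  intros [Hgf Hfg]. induction 1 as [| | | ? A ? ? ? Hd | ? s | ? s | | | |];
    simpl; try constructor; auto.
  - unfold open. rewrite rename_open. constructor. rewrite Hgf; auto.
  - destruct (HD A) as [_ Hi]. rewrite Hd in Hi.
    rewrite rename_subst by auto. econstructor; eauto. rewrite length_map; auto.
  - destruct s; simpl in *; rewrite ?Hgf; auto.
  - destruct s; simpl in *; rewrite ?Hgf; auto.
Qed.


Definition same_upto_fresh (E : env) (a1 a2 : act) (Q1 Q2 : list thread) (T1 T2 : thread) : Prop :=
  (a1 = a2 /\ Q1 = Q2 /\ T1 = T2) \/
  (exists s1 s2, a1 = ALocal s1 /\ a2 = ALocal s2 /\ E s1 = None /\ E s2 = None /\
     Q2 = map (rename (swap s1 s2)) Q1 /\ T2 = rename (swap s1 s2) T1).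

Lemma same_upto_fresh_ctx E (C : thread -> thread) a1 a2 Q1 Q2 T1 T2 :
  (forall s1 s2, E s1 = None -> E s2 = None ->
     rename (swap s1 s2) (C T1) = C (rename (swap s1 s2) T1)) ->
  same_upto_fresh E a1 a2 Q1 Q2 T1 T2 -> same_upto_fresh E a1 a2 Q1 Q2 (C T1) (C T2).
Proof.
  intros HC [[? [? ?]]|[s1 [s2 [? [? [? [? [? ?]]]]]]]]; subst; [left; auto|].
  right. exists s1, s2. repeat split; auto.
  rewrite HC; auto.
Qed.

Lemma rename_swap_sn_defined (E : env) s1 s2 x : E s1 = None -> E s2 = None ->
  (forall y, In y (fsn x) -> E y <> None) -> rename_sn (swap s1 s2) x = x.
Proof.
  intros H1 H2 H. destruct x as [y|]; simpl in *; auto.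
  rewrite swap_other; auto; intros ->; eapply H; eauto.
Qed.

Lemma mstep_deterministic E T a1 Q1 T1 a2 Q2 T2 :
  (forall x, In x (fsig T) -> E x <> None) ->
  mstep E T a1 Q1 T1 -> mstep E T a2 Q2 T2 -> same_upto_fresh E a1 a2 Q1 Q2 T1 T2.
Proof.
  intros Hd H1. revert a2 Q2 T2 Hd.
  induction H1; intros a0 Q0 T0 Hd H2; inversion H2; subst; simpl in *;
    try (left; auto; fail);
    try match goal with H : mstep _ TNil _ _ _ |- _ => inversion H end.
  - right. exists s, s0. repeat split; auto.
    unfold open. rewrite rename_open, swap_l. f_equal.
    symmetry. eapply rename_swap_undefined; eauto.
  - match goal with H : D A = _, H' : D A = _ |- _ => rewrite H in H'; injection H' as -> -> end.
    left; auto.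
  - apply (same_upto_fresh_ctx E (TWhen s)); auto using in_or_app.
    intros; simpl; f_equal. eapply rename_swap_sn_defined; eauto using in_or_app.
  - apply (same_upto_fresh_ctx E (TWatch s)); auto using in_or_app.
    intros; simpl; f_equal. eapply rename_swap_sn_defined; eauto using in_or_app.
  - apply (same_upto_fresh_ctx E (fun X => TSeq X T2)); auto using in_or_app.
    intros; simpl; f_equal. eapply rename_swap_undefined; eauto using in_or_app.
Qed.

Inductive mstar : env -> thread -> list thread -> thread -> env -> Prop :=
| ms_refl : forall E T, mstar E T [] T E
| ms_step : forall E T a Q1 T1 Q2 T2 E2, mstep E T a Q1 T1 ->
    mstar (apply_act E a) T1 Q2 T2 E2 -> mstar E T (Q1 ++ Q2) T2 E2.

Lemma mstar_one E T a Q T' : mstep E T a Q T' -> mstar E T Q T' (apply_act E a).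
Proof. intros. rewrite <- (app_nil_r Q). econstructor; eauto. constructor. Qed.

Lemma mstar_trans E T Q1 T1 E1 Q2 T2 E2 :
  mstar E T Q1 T1 E1 -> mstar E1 T1 Q2 T2 E2 -> mstar E T (Q1 ++ Q2) T2 E2.
Proof.
  induction 1; intros; simpl; auto. rewrite <- app_assoc. econstructor; eauto.
Qed.

Lemma mstar_true_le E T Q T' E' : mstar E T Q T' E' -> env_true_le E E'.
Proof.
  induction 1; intros s Hs; auto.
  apply IHmstar. eapply apply_act_true_le; eauto using mstep_act_ok.
Qed.

Lemma mstar_seq E T Q T' E' X :
  mstar E T Q T' E' -> mstar E (TSeq T X) Q (TSeq T' X) E'.
Proof. induction 1; econstructor; eauto using mstep. Qed.

Lemma mstar_watch E T Q T' E' s :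
  mstar E T Q T' E' -> mstar E (TWatch s T) Q (TWatch s T') E'.
Proof. induction 1; econstructor; eauto using mstep. Qed.

Lemma mstar_when E T Q T' E' s : val E s = Some true ->
  mstar E T Q T' E' -> mstar E (TWhen s T) Q (TWhen s T') E'.
Proof.
  intros Hs H. induction H; econstructor; eauto using mstep.
  apply IHmstar. eapply val_true_le; eauto using apply_act_true_le, mstep_act_ok.
Qed.

Lemma step_mstar E T P T' E' : step D E T P T' E' -> mstar E T P T' E'.
Proof.
  induction 1.
  - constructor.
  - apply (mstar_one _ _ (AEmit s)). constructor.
  - rewrite <- (app_nil_l P). econstructor; [apply M_local; eauto | exact IHstep].
  - apply (mstar_one _ _ ANone). constructor.
  - rewrite <- (app_nil_l P). econstructor; [eapply M_call; eauto | exact IHstep].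
  - constructor.
  - rewrite <- (app_nil_r P). eapply mstar_trans; [apply mstar_when; eauto|].
    apply (mstar_one _ _ ANone). constructor.
    eapply val_true_le; eauto using mstar_true_le.
  - apply mstar_when; auto.
  - rewrite <- (app_nil_r P). eapply mstar_trans; [apply mstar_watch; eauto|].
    apply (mstar_one _ _ ANone). constructor.
  - apply mstar_watch; auto.
  - eapply mstar_trans; [apply mstar_seq; eauto|].
    rewrite <- (app_nil_l P2). econstructor; [apply M_seq_nil | exact IHstep2].
  - apply mstar_seq; auto.
Qed.

(* The shape of a thread that is stuck for [step]. *)
Inductive blocked (E : env) : thread -> Prop :=
| B_nil : blocked E TNil
| B_when_false : forall s T, val E s = Some false -> blocked E (TWhen s T)
| B_when_true : forall s T, val E s = Some true -> blocked E T -> T <> TNil ->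
    blocked E (TWhen s T)
| B_watch : forall s T, blocked E T -> T <> TNil -> blocked E (TWatch s T)
| B_seq : forall T1 T2, blocked E T1 -> T1 <> TNil -> blocked E (TSeq T1 T2).

Lemma step_blocked E T P T' E' : step D E T P T' E' -> blocked E' T'.
Proof.
  induction 1; try (constructor; auto; fail); auto.
  apply B_when_true; auto.
  eapply val_true_le; eauto using mstar_true_le, step_mstar.
Qed.

Lemma blocked_no_mstep E T a Q T' : blocked E T -> ~ mstep E T a Q T'.
Proof.
  intros Hb. revert a Q T'.
  induction Hb; intros a Q T' Hm; inversion Hm; subst; try congruence.
  all: eapply IHHb; eauto.
Qed.

Lemma stuck_no_mstep E T a Q T' : stuck D E T -> ~ mstep E T a Q T'.
Proof. intros H. apply blocked_no_mstep. eapply step_blocked; eauto. Qed.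

Definition cfg := (program * env)%type.

Inductive cstep : cfg -> cfg -> Prop :=
| cs_intro : forall P E T Rest a Q T', Permutation P (T :: Rest) -> mstep E T a Q T' ->
    cstep (P, E) (T' :: Rest ++ Q, apply_act E a).

Inductive csteps : nat -> cfg -> cfg -> Prop :=
| css_refl : forall X, csteps 0 X X
| css_step : forall n X Y Z, cstep X Y -> csteps n Y Z -> csteps (S n) X Z.

Lemma csteps_trans n m X Y Z : csteps n X Y -> csteps m Y Z -> csteps (n + m) X Z.
Proof. induction 1; intros; simpl; auto. econstructor; eauto. Qed.

Lemma csteps_perm n P P' E N E' : Permutation P P' -> csteps n (P', E) (N, E') ->
  exists N', csteps n (P, E) (N', E') /\ Permutation N' N.
Proof.
  intros Hp H. inversion H as [|? ? ? ? Hs]; subst.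
  - exists P. split; [constructor | auto].
  - exists N. split; auto. econstructor; eauto.
    inversion Hs; subst. econstructor; [eapply perm_trans|]; eauto.
Qed.

Definition normal (X : cfg) : Prop := forall Y, ~ cstep X Y.

Definition cfg_equiv (B : signal -> Prop) (X Y : cfg) : Prop :=
  exists f g, bij f g /\ (forall x, B x -> f x = x) /\
    (forall x, snd Y (f x) = snd X x) /\ Permutation (map (rename f) (fst X)) (fst Y).

Lemma map_rename_id P : map (rename (fun x => x)) P = P.
Proof. apply map_rename_id_on. auto. Qed.

Lemma cfg_equiv_perm B P P' E : Permutation P P' -> cfg_equiv B (P, E) (P', E).
Proof.
  intros. exists (fun x => x), (fun x => x). repeat split; simpl; auto.
  rewrite map_rename_id. auto.
Qed.

Lemma cfg_equiv_refl B X : cfg_equiv B X X.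
Proof. destruct X. apply cfg_equiv_perm. auto. Qed.

Lemma cfg_equiv_sym B X Y : cfg_equiv B X Y -> cfg_equiv B Y X.
Proof.
  destruct X as [P E], Y as [P' E'].
  intros [f [g [[Hgf Hfg] [Hb [He Hp]]]]]; simpl in *.
  exists g, f. repeat split; simpl; auto.
  - intros x Bx. rewrite <- (Hb x Bx) at 1. auto.
  - intros x. rewrite <- He, Hfg. auto.
  - apply Permutation_map with (f := rename g) in Hp.
    rewrite map_rename_comp, (map_rename_ext _ (fun x => x)), map_rename_id in Hp by auto.
    symmetry. auto.
Qed.

Lemma cfg_equiv_trans B X Y Z : cfg_equiv B X Y -> cfg_equiv B Y Z -> cfg_equiv B X Z.
Proof.
  destruct X as [P E], Y as [P' E'], Z as [P'' E''].
  intros [f [g [[Hgf Hfg] [Hb [He Hp]]]]] [f' [g' [[Hgf' Hfg'] [Hb' [He' Hp']]]]]; simpl in *.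
  exists (fun x => f' (f x)), (fun x => g (g' x)). repeat split; simpl.
  - intros x. rewrite Hgf', Hgf. auto.
  - intros x. rewrite Hfg, Hfg'. auto.
  - intros x Bx. rewrite Hb, Hb'; auto.
  - intros x. rewrite He', He. auto.
  - rewrite <- map_rename_comp. eapply perm_trans; [apply Permutation_map|]; eauto.
Qed.

Lemma cstep_equiv B X Y X' : cfg_equiv B X Y -> cstep X X' ->
  exists Y', cstep Y Y' /\ cfg_equiv B X' Y'.
Proof.
  destruct Y as [P2 E2]. intros [f [g [Hbij [Hb [He Hp]]]]] Hs.
  destruct Hs as [P E T Rest a Q T' Hperm Hm]; simpl in *.
  assert (HE2 : E2 = fun x => E (g x)).
  { apply functional_extensionality. intros x. rewrite <- He, (proj2 Hbij). auto. }
  subst E2.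
  exists (rename f T' :: map (rename f) Rest ++ map (rename f) Q,
          apply_act (fun x => E (g x)) (rename_act f a)).
  split.
  - apply cs_intro with (T := rename f T); [|eapply mstep_rename; eauto].
    eapply perm_trans; [symmetry; eauto|].
    apply Permutation_map with (f := rename f) in Hperm. exact Hperm.
  - exists f, g. split; [|split; [|split]]; simpl; auto.
    + intros x. rewrite <- (apply_act_rename f g E a Hbij), (proj1 Hbij). auto.
    + rewrite map_app. auto.
Qed.

Lemma csteps_equiv B n X Z Y : csteps n X Z -> cfg_equiv B X Y ->
  exists Z', csteps n Y Z' /\ cfg_equiv B Z Z'.
Proof.
  intros H. revert Y. induction H; intros Y0 He.
  - exists Y0. split; [constructor | auto].
  - destruct (cstep_equiv B _ _ _ He H) as [Y' [H1 H2]].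
    destruct (IHcsteps _ H2) as [Z' [H3 H4]].
    exists Z'. split; auto. econstructor; eauto.
Qed.

Lemma normal_equiv B X Y : cfg_equiv B X Y -> normal X -> normal Y.
Proof.
  intros He Hn Y' Hs.
  destruct (cstep_equiv B _ _ _ (cfg_equiv_sym _ _ _ He) Hs) as [X' [H _]].
  eapply Hn; eauto.
Qed.

Definition wf_cfg (B : signal -> Prop) (X : cfg) : Prop :=
  (forall T x, In T (fst X) -> In x (fsig T) -> snd X x <> None) /\
  (exists L, forall x, snd X x <> None -> In x L) /\
  (forall x, B x -> snd X x <> None).

Lemma wf_cfg_cstep B X Y : wf_cfg B X -> cstep X Y -> wf_cfg B Y.
Proof.
  intros [Hsig [[L HL] HB]] Hs. destruct Hs as [P E T Rest a Q T' Hp Hm]; simpl in *.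
  destruct (mstep_fsig _ _ _ _ _ Hm) as [HT' HQ].
  assert (HinP : forall T0, In T0 (T :: Rest) -> In T0 P).
  { intros T0 H. eapply Permutation_in; [symmetry|]; eauto. }
  assert (Hnew : forall x, In x (fsig T) \/ a = ALocal x -> apply_act E a x <> None).
  { intros x [Hx| ->]; simpl; [apply apply_act_defined; eauto with datatypes|].
    rewrite upd_same. discriminate. }
  split; [|split].
  - simpl. intros T0 x [<-|Hin] Hx; [auto|].
    apply in_app_or in Hin as [Hin|Hin]; [|eauto].
    apply apply_act_defined. eauto with datatypes.
  - exists (act_signals a ++ L). intros x Hx.
    apply apply_act_defined_inv in Hx as [Hx|Hx]; auto using in_or_app.
  - intros. apply apply_act_defined. auto.
Qed.

Lemma cstep_perm P P' E Y : Permutation P P' -> cstep (P', E) Y -> cstep (P, E) Y.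
Proof.
  intros Hp Hs. inversion Hs; subst. econstructor; [eapply perm_trans|]; eauto.
Qed.

Lemma apply_act_comm E a1 a2 : act_ok E a1 -> act_ok E a2 ->
  (forall s, a1 = AEmit s -> E s <> None) -> (forall s, a2 = AEmit s -> E s <> None) ->
  (forall s, a1 = ALocal s -> a2 <> ALocal s) ->
  apply_act (apply_act E a1) a2 = apply_act (apply_act E a2) a1.
Proof.
  intros Ok1 Ok2 He1 He2 Hl. destruct a1 as [|s1|s1], a2 as [|s2|s2]; simpl in *; auto;
    apply functional_extensionality; intros x; unfold upd;
    destruct (Nat.eqb_spec x s1), (Nat.eqb_spec x s2); subst; auto.
  - exfalso. eapply He1; eauto.
  - exfalso. eapply He2; eauto.
Qed.

Lemma act_ok_after E a1 a2 : act_ok E a2 ->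
  (forall s, a1 = AEmit s -> E s <> None) -> (forall s, a1 = ALocal s -> a2 <> ALocal s) ->
  act_ok (apply_act E a1) a2.
Proof.
  intros Hok He Hl. destruct a2 as [| |s2]; simpl in *; auto.
  destruct a1 as [|s1|s1]; simpl; auto;
    rewrite upd_other; auto; intros ->; [eapply He | eapply Hl]; eauto.
Qed.

Lemma mstep_realloc E T s s3 Q T' :
  (forall x, In x (fsig T) -> E x <> None) -> E s3 = None -> s3 <> s ->
  mstep E T (ALocal s) Q T' ->
  mstep (upd E s false) T (ALocal s3) (map (rename (swap s s3)) Q) (rename (swap s s3) T').
Proof.
  intros Hd Hs3 Hne Hm.
  assert (Hs : E s = None) by exact (mstep_act_ok _ _ _ _ _ Hm).
  pose proof (mstep_rename _ _ _ _ _ _ _ (swap_bij s s3) Hm) as Hr. simpl in Hr.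
  rewrite env_swap_invariant, swap_l, (rename_swap_undefined E) in Hr; auto; try congruence.
  eapply mstep_true_le; eauto.
  - apply (apply_act_true_le E (ALocal s)). auto.
  - simpl. rewrite upd_other; auto.
Qed.

Lemma swap_r a b : swap a b b = a.
Proof. unfold swap. destruct (Nat.eqb_spec b a); rewrite ?Nat.eqb_refl; auto. Qed.

Lemma upd_swap (E : env) s1 s2 b : E s1 = E s2 ->
  (fun x => upd E s2 b (swap s1 s2 x)) = upd E s1 b.
Proof.
  intros H. rewrite (upd_rename _ _ _ _ _ (swap_bij s1 s2)), swap_r, env_swap_invariant; auto.
Qed.

Lemma perm_exchange (x y : thread) R A B :
  Permutation (x :: (y :: R ++ A) ++ B) (y :: (x :: R ++ B) ++ A).
Proof.
  simpl. rewrite <- !app_assoc. eapply perm_trans; [apply perm_swap|].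
  do 2 constructor. apply Permutation_app_head, Permutation_app_comm.
Qed.

Lemma cstep_same_thread B P E T R1 R2 a1 Q1 T1 a2 Q2 T2 :
  wf_cfg B (P, E) -> Permutation P (T :: R1) -> Permutation P (T :: R2) ->
  mstep E T a1 Q1 T1 -> mstep E T a2 Q2 T2 ->
  cfg_equiv B (T1 :: R1 ++ Q1, apply_act E a1) (T2 :: R2 ++ Q2, apply_act E a2).
Proof.
  intros [Hsig [_ HB]] Hp1 Hp2 Hm1 Hm2; simpl in *.
  assert (HR : Permutation R1 R2).
  { apply Permutation_cons_inv with T. eapply perm_trans; [symmetry; exact Hp1 | exact Hp2]. }
  assert (HinP : forall T0, In T0 (T :: R1) -> In T0 P).
  { intros T0 H. apply Permutation_in with (T :: R1); [symmetry; exact Hp1 | exact H]. }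
  destruct (mstep_deterministic E T a1 Q1 T1 a2 Q2 T2) as
    [[-> [-> ->]]|[s1 [s2 [-> [-> [Hs1 [Hs2 [-> ->]]]]]]]]; eauto with datatypes.
  - apply cfg_equiv_perm. constructor. apply Permutation_app_tail. auto.
  - exists (swap s1 s2), (swap s1 s2). split; [apply swap_bij|]. split; [|split]; simpl.
    + intros x Bx. apply swap_other; intros ->; eapply HB; eauto.
    + intros x. rewrite <- (upd_swap E s1 s2 false) by congruence. auto.
    + rewrite map_app, (map_rename_id_on _ R1).
      * constructor. apply Permutation_app_tail. auto.
      * intros T0 x HT Hx.
        apply swap_other; intros ->; apply (Hsig T0 _ (HinP T0 (or_intror HT)) Hx); auto.
Qed.

Lemma cstep_commute B E T1 T2 R a1 Q1 T1' a2 Q2 T2' :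
  (forall x, In x (fsig T1) -> E x <> None) -> (forall x, In x (fsig T2) -> E x <> None) ->
  (forall s, a1 = ALocal s -> a2 <> ALocal s) ->
  mstep E T1 a1 Q1 T1' -> mstep E T2 a2 Q2 T2' ->
  exists Z1 Z2, cstep (T1' :: (T2 :: R) ++ Q1, apply_act E a1) Z1 /\
    cstep (T2' :: (T1 :: R) ++ Q2, apply_act E a2) Z2 /\ cfg_equiv B Z1 Z2.
Proof.
  intros Hd1 Hd2 Hl Hm1 Hm2.
  pose proof (mstep_act_ok _ _ _ _ _ Hm1) as Ok1.
  pose proof (mstep_act_ok _ _ _ _ _ Hm2) as Ok2.
  assert (Em1 : forall s, a1 = AEmit s -> E s <> None) by eauto using mstep_emit_fsig.
  assert (Em2 : forall s, a2 = AEmit s -> E s <> None) by eauto using mstep_emit_fsig.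
  assert (Hl' : forall s, a2 = ALocal s -> a1 <> ALocal s) by (intros s H1 H2; eapply Hl; eauto).
  eexists (T2' :: (T1' :: R ++ Q1) ++ Q2, _), (T1' :: (T2' :: R ++ Q2) ++ Q1, _).
  split; [|split].
  - apply cs_intro with (T := T2); [apply perm_swap|].
    eapply mstep_true_le; eauto using apply_act_true_le, act_ok_after.
  - apply cs_intro with (T := T1); [apply perm_swap|].
    eapply mstep_true_le; eauto using apply_act_true_le, act_ok_after.
  - rewrite apply_act_comm by auto. apply cfg_equiv_perm, perm_exchange.
Qed.

Lemma cstep_local_conflict B E T1 T2 R s Q1 T1' Q2 T2' :
  wf_cfg B (T1 :: T2 :: R, E) ->
  mstep E T1 (ALocal s) Q1 T1' -> mstep E T2 (ALocal s) Q2 T2' ->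
  exists Z1 Z2, cstep (T1' :: (T2 :: R) ++ Q1, apply_act E (ALocal s)) Z1 /\
    cstep (T2' :: (T1 :: R) ++ Q2, apply_act E (ALocal s)) Z2 /\ cfg_equiv B Z1 Z2.
Proof.
  intros [Hsig [[L HL] HB]] Hm1 Hm2; simpl in *.
  assert (Hs : E s = None) by exact (mstep_act_ok _ _ _ _ _ Hm1).
  destruct (fresh_signal (s :: L)) as [s3 Hs3].
  assert (E3 : E s3 = None).
  { destruct (E s3) eqn:X; auto. exfalso. apply Hs3. right. apply HL. congruence. }
  assert (N3 : s3 <> s) by (intros ->; apply Hs3; left; auto).
  set (sw := swap s s3).
  exists (rename sw T2' :: (T1' :: R ++ Q1) ++ map (rename sw) Q2,
          apply_act (upd E s false) (ALocal s3)).
  exists (rename sw T1' :: (T2' :: R ++ Q2) ++ map (rename sw) Q1,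
          apply_act (upd E s false) (ALocal s3)).
  split; [|split].
  - apply cs_intro with (T := T2); [apply perm_swap|].
    apply (mstep_realloc E); eauto with datatypes.
  - apply cs_intro with (T := T1); [apply perm_swap|].
    apply (mstep_realloc E); eauto with datatypes.
  - exists sw, sw. split; [apply swap_bij|]. split; [|split]; simpl.
    + intros x Bx. apply swap_other; intros ->; eapply HB; eauto.
    + intros x. refine (f_equal (fun h : env => h x) (env_swap_invariant _ s s3 _)).
      rewrite upd_same, upd_other, upd_same; auto.
    + unfold sw. rewrite rename_swap_involutive, !map_app, map_rename_comp.
      rewrite (map_rename_ext (fun x => swap s s3 (swap s s3 x)) (fun x => x)), map_rename_id
        by apply swap_involutive.
      rewrite (map_rename_id_on _ R); [apply perm_exchange|].
      intros T x HT Hx. apply swap_other; intros ->; eapply Hsig; eauto with datatypes.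
Qed.

Lemma wf_cfg_perm B P P' E : Permutation P P' -> wf_cfg B (P, E) -> wf_cfg B (P', E).
Proof.
  intros Hp [Hsig [HL HB]]. split; [|split]; simpl in *; auto.
  intros T x HT. apply Hsig. eapply Permutation_in; [symmetry|]; eauto.
Qed.

Lemma cstep_distinct_threads B E T1 T2 R a1 Q1 T1' a2 Q2 T2' :
  wf_cfg B (T1 :: T2 :: R, E) -> mstep E T1 a1 Q1 T1' -> mstep E T2 a2 Q2 T2' ->
  exists Z1 Z2, cstep (T1' :: (T2 :: R) ++ Q1, apply_act E a1) Z1 /\
    cstep (T2' :: (T1 :: R) ++ Q2, apply_act E a2) Z2 /\ cfg_equiv B Z1 Z2.
Proof.
  intros Hwf Hm1 Hm2.
  destruct (classic (exists s, a1 = ALocal s /\ a2 = ALocal s)) as [[s [-> ->]]|Hnc].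
  - eapply cstep_local_conflict; eauto.
  - destruct Hwf as [Hsig _]. simpl in Hsig.
    eapply cstep_commute; eauto.
Qed.

Lemma cstep_diamond B X A C : wf_cfg B X -> cstep X A -> cstep X C ->
  cfg_equiv B A C \/ exists A' C', cstep A A' /\ cstep C C' /\ cfg_equiv B A' C'.
Proof.
  intros Hwf HA HC.
  destruct HA as [P E T1 R1 a1 Q1 T1' Hp1 Hm1].
  inversion HC as [P0 E0 T2 R2 a2 Q2 T2' Hp2 Hm2]; subst P0 E0 C; clear HC.
  destruct (classic (T1 = T2)) as [<-|Hne]; [left; eapply cstep_same_thread; eauto|].
  right.
  assert (HT2 : In T2 R1).
  { assert (H : In T2 (T1 :: R1)).
    { apply Permutation_in with P; auto. apply Permutation_in with (T2 :: R2); [symmetry|]; simpl; auto. }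
    destruct H; congruence. }
  apply in_split in HT2 as [l1 [l2 ->]].
  set (R := l1 ++ l2).
  assert (HR1 : Permutation (l1 ++ T2 :: l2) (T2 :: R)) by (symmetry; apply Permutation_middle).
  assert (HR2 : Permutation R2 (T1 :: R)).
  { apply Permutation_cons_inv with T2. eapply perm_trans; [symmetry; exact Hp2|].
    eapply perm_trans; [exact Hp1|]. eapply perm_trans; [constructor; exact HR1|]. apply perm_swap. }
  assert (Hwf' : wf_cfg B (T1 :: T2 :: R, E)).
  { apply wf_cfg_perm with P; auto. eapply perm_trans; [exact Hp1|]. constructor. exact HR1. }
  destruct (cstep_distinct_threads B E T1 T2 R a1 Q1 T1' a2 Q2 T2' Hwf' Hm1 Hm2)
    as [Z1 [Z2 [HZ1 [HZ2 HZ]]]].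
  exists Z1, Z2. split; [|split]; auto.
  - apply cstep_perm with (T1' :: (T2 :: R) ++ Q1); auto.
    constructor. apply Permutation_app_tail. auto.
  - apply cstep_perm with (T2' :: (T1 :: R) ++ Q2); auto.
    constructor. apply Permutation_app_tail. auto.
Qed.

(* Since diamonds close in at most one step on each side, every reduction
   sequence from [X] to a normal form has the same length. *)
Lemma csteps_normal_cstep B n X N Y : wf_cfg B X -> csteps n X N -> normal N -> cstep X Y ->
  exists m N', n = S m /\ csteps m Y N' /\ cfg_equiv B N N'.
Proof.
  revert X N Y. induction n as [|n IH]; intros X N Y Hwf Hr Hn Hs.
  - inversion Hr; subst. exfalso. eapply Hn; eauto.
  - inversion Hr as [|? ? A ? HA Hr']; subst.
    destruct (cstep_diamond B X A Y Hwf HA Hs) as [He|[A' [Y' [H1 [H2 H3]]]]].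
    + destruct (csteps_equiv B _ _ _ _ Hr' He) as [N' [H4 H5]].
      exists n, N'. auto.
    + destruct (IH A N A' (wf_cfg_cstep _ _ _ Hwf HA) Hr' Hn H1) as [k [N'' [-> [H4 H5]]]].
      destruct (csteps_equiv B _ _ _ _ H4 H3) as [N3 [H6 H7]].
      exists (S k), N3. repeat split.
      * econstructor; eauto.
      * eapply cfg_equiv_trans; eauto.
Qed.

Lemma csteps_normal_unique B n m X N1 N2 : wf_cfg B X ->
  csteps n X N1 -> normal N1 -> csteps m X N2 -> normal N2 -> cfg_equiv B N1 N2.
Proof.
  revert m X N1. induction n as [|n IH]; intros m X N1 Hwf H1 Hn1 H2 Hn2.
  - inversion H1; subst. inversion H2; subst; [apply cfg_equiv_refl|].
    exfalso. eapply Hn1; eauto.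
  - inversion H2 as [|m' ? Y ? HY H2']; subst.
    + inversion H1; subst. exfalso. eapply Hn2; eauto.
    + destruct (csteps_normal_cstep B _ _ _ _ Hwf H1 Hn1 HY) as [k [N1' [Hk [H3 H4]]]].
      injection Hk as <-.
      eapply cfg_equiv_trans; [exact H4|].
      apply (IH m' Y N1'); eauto using wf_cfg_cstep, normal_equiv.
Qed.

Lemma mstar_csteps E T Q T' E' R : mstar E T Q T' E' ->
  exists n, csteps n (T :: R, E) (T' :: R ++ Q, E').
Proof.
  intros H. revert R. induction H; intros R.
  - exists 0. rewrite app_nil_r. constructor.
  - destruct (IHmstar (R ++ Q1)) as [n Hn]. exists (S n). econstructor.
    + apply (cs_intro (T :: R) E T R a Q1 T1); auto.
    + rewrite app_assoc. exact Hn.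
Qed.

Lemma instant_csteps P E P'' E'' : instant D P E P'' E'' ->
  exists n N, csteps n (P, E) (N, E'') /\ normal (N, E'') /\
    Permutation (map (abort E'') N) P''.
Proof.
  induction 1 as [P E Hstuck | Pa T Pb E P' T' E' P'' E'' _ Hstep _ [n [N [H2 [H3 H4]]]]].
  - exists 0, P. split; [constructor|]. split; auto.
    intros Y Hs. inversion Hs as [? ? T Rest ? ? ? Hp Hm]; subst.
    eapply stuck_no_mstep; [apply Hstuck|eauto].
    apply Permutation_in with (T :: Rest); [symmetry; auto | simpl; auto].
  - destruct (mstar_csteps _ _ _ _ _ (Pa ++ Pb) (step_mstar _ _ _ _ _ Hstep)) as [k Hk].
    assert (Hp : Permutation (T' :: (Pa ++ Pb) ++ P') (Pa ++ T' :: Pb ++ P')).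
    { rewrite <- app_assoc. apply Permutation_middle. }
    destruct (csteps_perm n _ _ E' N E'' Hp H2) as [N' [H5 H6]].
    assert (Hp2 : Permutation (Pa ++ T :: Pb) (T :: Pa ++ Pb)) by (symmetry; apply Permutation_middle).
    destruct (csteps_perm (k + n) _ _ E N' E'' Hp2 (csteps_trans _ _ _ _ _ Hk H5)) as [N2 [H7 H8]].
    assert (HN : Permutation N2 N) by (eapply perm_trans; eauto).
    exists (k + n), N2. split; auto. split.
    + intros Y Hs. apply (H3 Y). eapply cstep_perm; [symmetry|]; eauto.
    + eapply perm_trans; [|eauto]. apply Permutation_map. auto.
Qed.

Lemma memb_In s l : memb s l = true <-> In s l.
Proof.
  unfold memb. rewrite existsb_exists. split.
  - intros [x [Hx Hs]]. apply Nat.eqb_eq in Hs. subst. auto.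
  - intros H. exists s. split; auto. apply Nat.eqb_refl.
Qed.

Lemma init_env_defined Int I P x : In x (Int ++ sigP P) -> init_env Int I P x <> None.
Proof.
  intros Hx. unfold init_env. destruct (I x); [discriminate|].
  apply memb_In in Hx. rewrite Hx. discriminate.
Qed.

Lemma wf_cfg_init_env Int I P : (forall s, I s = true -> In s Int) ->
  wf_cfg (fun x => init_env Int I P x <> None) (P, init_env Int I P).
Proof.
  intros HI. split; [|split]; simpl; auto.
  - intros T x HT Hx. apply init_env_defined, in_or_app. right.
    apply in_flat_map. eauto.
  - exists (Int ++ sigP P). intros x Hx. unfold init_env in Hx.
    destruct (I x) eqn:Ix; [apply in_or_app; auto|].
    destruct (memb x (Int ++ sigP P)) eqn:Hm; [apply memb_In; auto | congruence].
Qed.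

(* The renaming fixes the domain of the initial environment, which contains [Int]. *)
Lemma trans_unique_upto_renaming Int P I O1 O2 Q1 Q2 :
  (forall s, I s = true -> In s Int) ->
  trans Int D P I O1 Q1 -> trans Int D P I O2 Q2 ->
  (forall s, O1 s = O2 s) /\ eq_up_to_renaming Int Q1 Q2.
Proof.
  intros HI [E1 [Hi1 ->]] [E2 [Hi2 ->]].
  destruct (instant_csteps _ _ _ _ Hi1) as [n1 [N1 [R1 [Nn1 Hp1]]]].
  destruct (instant_csteps _ _ _ _ Hi2) as [n2 [N2 [R2 [Nn2 Hp2]]]].
  destruct (csteps_normal_unique _ _ _ _ _ _ (wf_cfg_init_env Int I P HI) R1 Nn1 R2 Nn2)
    as [f [g [[Hgf Hfg] [Hb [He Hp]]]]]; simpl in *.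
  assert (Hfix : forall x, In x Int -> f x = x).
  { intros x Hx. apply Hb, init_env_defined, in_or_app. auto. }
  split.
  - intros s. unfold output. destruct (memb s Int) eqn:Hm; simpl; auto.
    apply memb_In in Hm. rewrite <- (He s), Hfix; auto.
  - exists f. split; [|split].
    + intros x y _ _ Hxy. rewrite <- (Hgf x), <- (Hgf y), Hxy. auto.
    + intros x _ [Hx|Hx]; auto.
      rewrite <- (Hgf x) at 2. rewrite <- (Hfix (f x) Hx) at 2. rewrite Hgf. auto.
    + eapply perm_trans; [apply Permutation_map; symmetry; exact Hp1|].
      rewrite map_map, (map_ext _ (fun T => abort E2 (rename f T))) by auto using rename_abort.
      rewrite <- map_map. eapply perm_trans; [apply Permutation_map; exact Hp | exact Hp2].
Qed.

Lemma deterministic_all Int P : deterministic Int D P.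
Proof.
  revert P. cofix CIH. intros P. constructor.
  intros I O1 O2 Q1 Q2 HI H1 H2.
  destruct (trans_unique_upto_renaming Int P I O1 O2 Q1 Q2 HI H1 H2) as [Ho Hr].
  auto.
Qed.

End Determinism.

Theorem proposition1 (Int : list signal) (D : defs) (P : program) :
  wf_defs D -> P <> nil -> deterministic Int D P.
Proof.
  intros HD _. apply deterministic_all. auto.
Qed.
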